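(* Let $C=(C_{i,j})$ be an $m\times n$ evolutionary stable (ES) configuration with $m,n>2$. Then for every integer $k\ge 0$ with $m-1-2k\ge 1$, row $m-1-2k$ is the string $101\,101\cdots101$, i.e.\ $C_{m-1-2k,j}=0$ if $j\equiv 2\pmod 3$ and $C_{m-1-2k,j}=1$ otherwise.
   Context: An $m\times n$ configuration is a $0$-$1$ matrix $C=(C_{i,j})$, $1\le i\le m$, $1\le j\le n$; $C_{i,j}=1$ means lot $(i,j)$ is occupied by a house. Row $1$ is the northernmost, row $m$ the southernmost; column $1$ westernmost, column $n$ easternmost. A house at $(i,j)$ is blocked from sunlight if the three lots $(i,j-1)$, $(i,j+1)$, $(i+1,j)$ all lie inside the grid and are all occupied (lots outside the grid never obstruct sunlight). $C$ is permissible if no house is blocked, and maximal if it is permissible and setting any single empty lot to $1$ yields a non-permissible configuration. A maximal configuration is resistant to predators if, for every empty lot, putting a house on it results in that new house being blocked; it is resistant to altruists if, for every empty lot, putting a house on it results in some other (already existing) house being blocked. An ES configuration is a maximal configuration resistant to both predators and altruists. *)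

From mathcomp Require Import all_boot.
Set Implicit Arguments. Unset Strict Implicit. Unset Printing Implicit Defensive.

(* An m x n configuration: C i j for 1 <= i <= m, 1 <= j <= n
   (values outside the grid are irrelevant and never consulted). *)
Definition config := nat -> nat -> bool.

Definition in_grid (m n i j : nat) : Prop := 1 <= i <= m /\ 1 <= j <= n.

Definition blocked (m n : nat) (C : config) (i j : nat) : Prop :=
  [/\ 1 < j, j < n, i < m & [&& C i j.-1, C i j.+1 & C i.+1 j]].

Definition permissible (m n : nat) (C : config) : Prop :=
  forall i j, in_grid m n i j -> C i j -> ~ blocked m n C i j.

Definition add_house (C : config) (a b : nat) : config :=
  fun i j => if (i == a) && (j == b) then true else C i j.

Definition maximal (m n : nat) (C : config) : Prop :=
  permissible m n C /\
  forall a b, in_grid m n a b -> C a b = false ->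
    ~ permissible m n (add_house C a b).

Definition resistant_predators (m n : nat) (C : config) : Prop :=
  forall a b, in_grid m n a b -> C a b = false ->
    blocked m n (add_house C a b) a b.

Definition resistant_altruists (m n : nat) (C : config) : Prop :=
  forall a b, in_grid m n a b -> C a b = false ->
    exists i j, [/\ in_grid m n i j, (i, j) <> (a, b), C i j &
                   blocked m n (add_house C a b) i j].

Definition ES (m n : nat) (C : config) : Prop :=
  [/\ maximal m n C, resistant_predators m n C & resistant_altruists m n C].

From mathcomp Require Import all_boot zify.
Set Implicit Arguments. Unset Strict Implicit. Unset Printing Implicit Defensive.

(* In an ES configuration every vacant lot has houses to its left, to its right
   and below it, no house has houses on both sides and below it, and filling a
   vacant lot blocks a neighbouring house.  Hence the vacancies of a row
   interlace with those of the row above, and an induction on the number of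
   columns (with a descent along the top row) shows that the first x lots of a
   row contain at most (x+1)/3 vacancies.  A row with no fully occupied triple
   (3t+1, 3t+2, 3t+3) therefore has houses at every position 3t+1 and, by the
   left-right symmetry, at every position 3t+3: for 3 | n it reads 101...101.
   The full bottom row makes row m-1 such a row, and a 101 row puts houses above
   its vacancies, which makes the row two above it such a row again.  When 3
   does not divide n, the same counting and symmetry give a contradiction in the
   lowest rows. *)

Record es_rules (m n : nat) (C : config) : Prop := EsRules {
  es_rows : 2 < m;
  es_cols : 2 < n;
  (* The next three fields come from resistance to predators, permissibility and
     resistance to altruists; in the last one, filling (a, b) blocks the house
     at (a, b-1), at (a, b+1) or at (a-1, b). *)
  vacant_enclosed : forall a b, 1 <= a <= m -> 1 <= b <= n -> ~~ C a b ->
    [/\ 1 < b < n, a < m, C a b.-1, C a b.+1 & C a.+1 b];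
  house_unblocked : forall i j, 1 <= i < m -> 1 < j < n ->
    C i j.-1 -> C i j -> C i j.+1 -> ~~ C i.+1 j;
  vacant_blocks : forall a b, 1 <= a <= m -> 1 <= b <= n -> ~~ C a b ->
    [\/ [/\ 2 < b, C a (b - 2) & C a.+1 b.-1],
        [/\ b.+2 <= n, C a b.+2 & C a.+1 b.+1] |
        [/\ 1 < a, C a.-1 b.-1, C a.-1 b & C a.-1 b.+1]] }.

Lemma add_house_other (C : config) a b i j :
  (i != a) || (j != b) -> add_house C a b i j = C i j.
Proof. by rewrite /add_house; case: (i == a); case: (j == b). Qed.

Section FromES.
Variables (m n : nat) (C : config).

Lemma permissible_unblocked : permissible m n C ->
  forall i j, 1 <= i < m -> 1 < j < n -> C i j.-1 -> C i j -> C i j.+1 -> ~~ C i.+1 j.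
Proof.
move=> hP i j hi hj l c r; apply/negP => d.
by apply: (hP i j _ c); [split; lia | split; rewrite ?l ?r ?d; lia].
Qed.

Lemma predators_enclosed : resistant_predators m n C ->
  forall a b, 1 <= a <= m -> 1 <= b <= n -> ~~ C a b ->
    [/\ 1 < b < n, a < m, C a b.-1, C a b.+1 & C a.+1 b].
Proof.
move=> hR a b ha hb /negbTE hab; have [b1 bn am] := hR a b (conj ha hb) hab.
by rewrite !add_house_other => [/and3P[]|||]; [split => //; lia | lia ..].
Qed.

Lemma altruists_block : permissible m n C -> resistant_altruists m n C ->
  forall a b, 1 <= a <= m -> 1 <= b <= n -> ~~ C a b ->
    [\/ [/\ 2 < b, C a (b - 2) & C a.+1 b.-1],
        [/\ b.+2 <= n, C a b.+2 & C a.+1 b.+1] |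
        [/\ 1 < a, C a.-1 b.-1, C a.-1 b & C a.-1 b.+1]].
Proof.
move=> hP hA a b ha hb /negbTE hab.
have [i [j [[hi hj] hij Cij [j1 jn im /and3P[l r d]]]]] := hA a b (conj ha hb) hab.
have other x y : (x != a) || (y != b) -> add_house C a b x y = C x y.
  exact: add_house_other.
have [/andP[/eqP <- /eqP ej] | n1] := boolP ((i == a) && (j.-1 == b)).
  rewrite other in r; last lia.
  rewrite other in d; last lia.
  have -> : b.+2 = j.+1 by lia.
  have -> : b.+1 = j by lia.
  by apply: Or32.
have [/andP[/eqP <- /eqP ej] | n2] := boolP ((i == a) && (j.+1 == b)).
  rewrite other in l; last lia.
  rewrite other in d; last lia.
  have -> : b - 2 = j.-1 by lia.
  have -> : b.-1 = j by lia.
  by apply: Or31; split => //; lia.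
have [/andP[/eqP <- /eqP <-] | n3] := boolP ((i.+1 == a) && (j == b)).
  rewrite other in l; last lia.
  rewrite other in r; last lia.
  by apply: Or33; split => //; case/andP: hi.
rewrite other in l; last lia.
rewrite other in r; last lia.
rewrite other in d; last lia.
by case: (hP i j (conj hi hj) Cij); split; rewrite ?l ?r ?d.
Qed.
End FromES.

Lemma es_rules_of_ES m n C : 2 < m -> 2 < n -> ES m n C -> es_rules m n C.
Proof.
move=> hm hn [[hP _] hR hA]; split => //.
- exact: predators_enclosed.
- exact: permissible_unblocked.
- exact: altruists_block.
Qed.

Fixpoint count_upto (f : nat -> bool) (x : nat) : nat :=
  if x is y.+1 then count_upto f y + f y.+1 else 0.

Lemma count_uptoS (f : nat -> bool) x : count_upto f x.+1 = count_upto f x + f x.+1.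
Proof. by []. Qed.

Lemma count_upto_mono (f : nat -> bool) : {homo count_upto f : x y / x <= y}.
Proof.
move=> x y /subnK <-; elim: (y - x) => [//|d IH].
by rewrite addSn count_uptoS; lia.
Qed.

Lemma count_upto_lt (f : nat -> bool) x d y : x < d <= y -> f d -> count_upto f x < count_upto f y.
Proof.
case: d => [|d] /andP[xd dy] fd; first by [].
have := count_upto_mono f (xd : x <= d); have := count_upto_mono f dy.
by rewrite count_uptoS fd /=; lia.
Qed.

Lemma count_upto_last (f : nat -> bool) x : 0 < count_upto f x ->
  exists b, [/\ 0 < b <= x, f b & count_upto f x = count_upto f b].
Proof.
elim: x => [//|x IH].
case fx: (f x.+1); first by move=> _; exists x.+1; rewrite fx leqnn.
by rewrite count_uptoS fx addn0 => /IH [b [hb fb ->]]; exists b; split => //; lia.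
Qed.

(* Between two consecutive points of B lies a point of A; [e] pays for the
   first point of B. *)
Lemma count_upto_interlace (A B : nat -> bool) n e :
  (forall b b', 0 < b -> b < b' -> b' <= n -> B b -> B b' -> exists2 c, b < c < b' & A c) ->
  (forall b, 0 < b <= n -> B b -> 0 < count_upto A b.-1 + e) ->
  forall y, y <= n -> count_upto B y <= count_upto A y + e.
Proof.
move=> between first.
have at_B y : 0 < y <= n -> B y -> count_upto B y <= count_upto A y.-1 + e.
  elim/ltn_ind: y => -[//|y] IH /andP[_ yn] By.
  rewrite count_uptoS By /=.
  have [-> | /count_upto_last [b [/andP[b0 by'] Bb ->]]] := posnP (count_upto B y).
    by have := first y.+1; rewrite By /=; lia.
  have [c /andP[bc cy] Ac] := between b y.+1 b0 by' yn Bb By.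
  have bn : 0 < b <= n by lia.
  have := IH b by' bn Bb.
  have bcy : b.-1 < c <= y by lia.
  have := count_upto_lt bcy Ac.
  lia.
move=> y yn.
have [-> // | /count_upto_last [b [/andP[b0 by'] Bb ->]]] := posnP (count_upto B y).
have bn : 0 < b <= n by lia.
have lb : b.-1 <= y by lia.
have := at_B b bn Bb; have := count_upto_mono A lb; lia.
Qed.

Definition vacancies (C : config) a x := count_upto (fun j => ~~ C a j) x.

Lemma vacancies_house (C : config) a x :
  C a x.+1 -> vacancies C a x.+1 = vacancies C a x.
Proof. by rewrite /vacancies count_uptoS => ->; rewrite addn0. Qed.

Lemma vacancies_vacant (C : config) a x :
  ~~ C a x.+1 -> vacancies C a x.+1 = (vacancies C a x).+1.
Proof. by rewrite /vacancies count_uptoS => ->; rewrite addn1. Qed.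

Definition full3 (C : config) a c := [&& C a c.-1, C a c & C a c.+1].

Definition nonfull_on n (C : config) a (P : pred nat) :=
  forall c, 1 < c < n -> P c -> ~~ full3 C a c.

Lemma vacancies_nonfull (C : config) a T :
  (forall t, t < T -> ~~ full3 C a (3 * t).+2) -> T <= vacancies C a (3 * T).
Proof.
elim: T => [//|T IH] nonfull.
have := IH (fun t lt => nonfull t (ltnW lt)); have := nonfull T (ltnSn T).
have -> : 3 * T.+1 = (3 * T).+3 by lia.
rewrite /vacancies !count_uptoS /full3 /=.
by case: (C a (3 * T).+1); case: (C a (3 * T).+2); case: (C a (3 * T).+3) => //=; lia.
Qed.

Section Rules.
Variables (m n : nat) (C : config).
Hypothesis hC : es_rules m n C.

Lemma bottom_row_house j : 1 <= j <= n -> C m j.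
Proof.
move=> hj; apply/idPn => hv; have hm : 1 <= m <= m by have := es_rows hC; lia.
by case: (vacant_enclosed hC hm hj hv); rewrite ltnn.
Qed.

Lemma first_col_house i : 1 <= i <= m -> C i 1.
Proof.
move=> hi; apply/idPn => hv; have h1 : 1 <= 1 <= n by have := es_cols hC; lia.
by case: (vacant_enclosed hC hi h1 hv).
Qed.

Lemma last_col_house i : 1 <= i <= m -> C i n.
Proof.
move=> hi; apply/idPn => hv; have hn : 1 <= n <= n by have := es_cols hC; lia.
by case: (vacant_enclosed hC hi hn hv); rewrite ltnn andbF.
Qed.

Lemma house_above_vacant a b : 1 <= a < m -> 1 <= b <= n -> ~~ C a.+1 b -> C a b.
Proof.
move=> ha hb hv; apply/idPn => hv'; have ha' : 1 <= a <= m by lia.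
by have [_ _ _ _ hd] := vacant_enclosed hC ha' hb hv'; rewrite hd in hv.
Qed.

Lemma nonfull_on_above a (P : pred nat) : 1 <= a < m ->
  (forall c, 1 < c < n -> P c -> C a.+1 c) -> nonfull_on n C a P.
Proof.
move=> ha below c hc Pc; apply/and3P => -[l x r].
by have := house_unblocked hC ha hc l x r; rewrite below.
Qed.

Lemma no_four_houses a j : 1 <= a < m -> 0 < j -> j.+3 <= n ->
  ~~ [&& C a j, C a j.+1, C a j.+2 & C a j.+3].
Proof.
move=> ha j0 jn; apply/and4P => -[h0 h1 h2 h3].
have j1 : 1 < j.+1 < n by lia.
have j2 : 1 < j.+2 < n by lia.
have v1 := house_unblocked hC ha j1 h0 h1 h2.
have v2 := house_unblocked hC ha j2 h1 h2 h3.
have ha' : 1 <= a.+1 <= m by lia.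
have j1' : 1 <= j.+1 <= n by lia.
by have [_ _ _ h _] := vacant_enclosed hC ha' j1' v1; rewrite h in v2.
Qed.

Lemma top_vacancy_left b : 1 <= b <= n -> ~~ C 1 b -> ~~ (C 1 b.+2 && C 2 b.+1) ->
  exists y, [/\ b = y.+3, C 1 y.+1 & C 2 y.+2].
Proof.
move=> hb hv right; have h1 : 1 <= 1 <= m by have := es_rows hC; lia.
case: (vacant_blocks hC h1 hb hv) => [[b2 l d] | [_ r d] | [] //].
- have [y ey] : exists y, b = y.+3 by exists (b - 3); lia.
  by move: l d; rewrite ey !subSS subn0 => l d; exists y.
- by rewrite r d in right.
Qed.

Lemma vacancy_between_rows u b b' : 1 <= u < m -> 0 < b -> b.+1 < b' -> b' <= n ->
  C u b -> C u.+1 b.+1 -> ~~ C u.+1 b' -> exists2 c, b < c < b' & ~~ C u c.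
Proof.
move=> hu b0 bb' b'n hub below hv.
have [h1 | v1] := boolP (C u b.+1); last by exists b.+1; [lia |].
have [h2 | v2] := boolP (C u b.+2); last first.
  have : b.+2 != b'.
    by apply: contraNneq v2 => ->; apply: house_above_vacant => //; lia.
  by exists b.+2; [lia |].
have j1 : 1 < b.+1 < n by lia.
by have := house_unblocked hC hu j1 hub h1 h2; rewrite below.
Qed.

Lemma vacancies_between u b b' : 1 <= u < m -> 0 < b -> b < b' -> b' <= n ->
  ~~ C u.+1 b -> ~~ C u.+1 b' -> exists2 c, b < c < b' & ~~ C u c.
Proof.
move=> hu b0 bb' b'n hv hv'.
have hu' : 1 <= u.+1 <= m by lia.
have hb : 1 <= b <= n by lia.
have [_ _ _ r _] := vacant_enclosed hC hu' hb hv.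
apply: vacancy_between_rows => //; last exact: house_above_vacant.
by rewrite ltn_neqAle bb' andbT; apply: contraNneq hv' => <-.
Qed.

Lemma vacancies_le_above u y : 1 <= u < m -> y <= n ->
  vacancies C u.+1 y <= vacancies C u y + 1.
Proof.
move=> hu yn; apply: (count_upto_interlace _ _ yn) => [b b' ? ? ? ? ?|b _ _].
- exact: vacancies_between.
- by rewrite addn1.
Qed.

Lemma vacancies_le_above_house2 u y : 1 <= u < m -> C u.+1 2 -> y <= n ->
  vacancies C u.+1 y <= vacancies C u y.
Proof.
move=> hu h2 yn; rewrite -[vacancies C u y]addn0.
apply: (count_upto_interlace _ _ yn) => [b b' ? ? ? ? ?|b hb hv].
  exact: vacancies_between.
have hu' : 1 <= u.+1 <= m by lia.
have b2 : 2 < b.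
  rewrite ltnNge; apply: contraNN hv => b_le2.
  have [-> | -> //] : b = 1 \/ b = 2 by lia.
  exact: first_col_house.
have hu1 : 1 <= u <= m by lia.
have [c /andP[c1 cb] hc] := vacancy_between_rows hu (isT : 0 < 1) b2 (proj2 (andP hb))
  (first_col_house hu1) h2 hv.
have hcb : 0 < c <= b.-1 by lia.
by have := count_upto_lt (f := fun j => ~~ C u j) hcb hc; lia.
Qed.


Definition sparse_below x0 :=
  forall x a, x < x0 -> x <= n -> 1 <= a <= m -> 3 * vacancies C a x <= x.+1.

Lemma sparse_violation_shape a x : 1 <= a <= m -> x <= n -> sparse_below x ->
  x.+1 < 3 * vacancies C a x ->
  exists z, [/\ x = z.+3, ~~ C a z.+1, ~~ C a z.+3 & 3 * vacancies C a z.+1 = z.+2].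
Proof.
case: x => [//|x] ha xn sparse viol.
have bound y : y <= x -> 3 * vacancies C a y <= y.+1.
  by move=> yx; apply: sparse => //; lia.
have vx : ~~ C a x.+1.
  by apply/negP => hx; move: viol; rewrite vacancies_house //; have := bound x (leqnn x); lia.
have hx : 1 <= x.+1 <= n by lia.
have [/andP[x1 _] _ hl _ _] := vacant_enclosed hC ha hx vx.
have [y ey] : exists y, x = y.+1 by exists x.-1; lia.
subst x; move: viol; rewrite vacancies_vacant // vacancies_house // => viol.
have [y0 | y_pos] := posnP y; first by move: viol; rewrite y0.
have [z ez] : exists z, y = z.+1 by exists y.-1; lia.
subst y; exists z; split => //.
  apply/negP => hz; move: viol; rewrite vacancies_house //.
  by have := bound z (leqW (leqnSn z)); lia.
by have := bound z.+1 (leqnSn _); lia.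
Qed.

(* A tight vacancy at column y forces another one at column y - 3. *)
Lemma top_row_not_tight y : y <= n -> sparse_below y -> ~~ C 1 y -> ~~ C 2 y.+1 ->
  3 * vacancies C 1 y != y.+1.
Proof.
elim/ltn_ind: y => y IH yn sparse v1 v2; apply/eqP => tight.
have [y0 | y_pos] := posnP y; first by move: tight; rewrite y0.
have hy : 1 <= y <= n by lia.
have right : ~~ (C 1 y.+2 && C 2 y.+1) by rewrite negb_and v2 orbT.
have [w [ey l d]] := top_vacancy_left hy v1 right.
subst y.
have h1 : 1 <= 1 <= m by have := es_rows hC; lia.
have [_ _ l' _ below1] := vacant_enclosed hC h1 hy v1.
move: tight; rewrite vacancies_vacant // !vacancies_house // => tight.
have [w0 | w_pos] := posnP w; first by move: tight; rewrite w0.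
have [v ev] : exists v, w = v.+1 by exists w.-1; lia.
subst w.
have vv : ~~ C 1 v.+1.
  apply/negP => hv; move: tight; rewrite vacancies_house //.
  have vlt : v < v.+4 by lia.
  have vn : v <= n by lia.
  by have := sparse v 1 vlt vn h1; lia.
have hv : 1 <= v.+1 <= n by lia.
have [_ _ _ _ below2] := vacant_enclosed hC h1 hv vv.
have v2' : ~~ C 2 v.+2.
  have r2 : 1 <= 2 < m by have := es_rows hC; lia.
  have vn : v.+1.+3 <= n by lia.
  apply: contraNN (no_four_houses r2 (ltn0Sn v) vn) => h2.
  by rewrite below2 h2 d below1.
have lt : v.+1 < v.+4 by lia.
have hv1 : v.+1 <= n by lia.
have sparse' : sparse_below v.+1 by move=> x a xv; apply: sparse; lia.
by apply: (negP (IH v.+1 lt hv1 sparse' vv v2')); apply/eqP; lia.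
Qed.

Lemma top_row_gap_not_tight z : z.+3 <= n -> sparse_below z.+3 -> ~~ C 1 z.+1 -> ~~ C 1 z.+3 ->
  3 * vacancies C 1 z.+1 != z.+2.
Proof.
move=> zn sparse v1 v3.
have h1 : 1 <= 1 <= m by have := es_rows hC; lia.
have sparse' : sparse_below z.+1 by move=> x a xz; apply: sparse; lia.
apply: top_row_not_tight => //; first lia.
apply/negP => h2.
have hz1 : 1 <= z.+1 <= n by lia.
have right : ~~ (C 1 z.+3 && C 2 z.+2) by rewrite (negbTE v3).
have [y [ey l d]] := top_vacancy_left hz1 v1 right.
have [_ _ _ _ below1] := vacant_enclosed hC h1 hz1 v1.
have hz3 : 1 <= z.+3 <= n by lia.
have [_ _ _ _ below3] := vacant_enclosed hC h1 hz3 v3.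
have ez : z = y.+2 by lia.
subst z.
have r2 : 1 <= 2 < m by have := es_rows hC; lia.
have yn : y.+2.+3 <= n by lia.
by have := no_four_houses r2 (ltn0Sn y.+1) yn; rewrite d below1 h2 below3.
Qed.

(* Comparing vacancy counts with the two rows above shows that (u, 2) and
   (u + 1, 2) are both vacant, although a vacancy has a house below it. *)
Lemma lower_row_gap_sparse u z : 1 <= u < m -> z.+3 <= n -> sparse_below z.+3 ->
  ~~ C u.+1 z.+1 -> ~~ C u.+1 z.+3 -> 3 * vacancies C u.+1 z.+3 <= z.+4.
Proof.
move=> hu zn sparse v1 v3; rewrite leqNgt; apply/negP => viol.
have hu1 : 1 <= u.+1 <= m by lia.
have hz1 : 1 <= z.+1 <= n by lia.
have hz2 : 1 <= z.+2 <= n by lia.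
have hz3 : 1 <= z.+3 <= n by lia.
have [_ _ _ h2 _] := vacant_enclosed hC hu1 hz1 v1.
have a1 := house_above_vacant hu hz1 v1.
have a3 := house_above_vacant hu hz3 v3.
have a2 : ~~ C u z.+2.
  apply/negP => x; have j2 : 1 < z.+2 < n by lia.
  by have := house_unblocked hC hu j2 a1 x a3; rewrite h2.
have hu' : 1 <= u <= m by lia.
have [w [ew w0 w1 w2 w3]] : exists w, [/\ u = w.+1, 0 < w, C w z.+1, C w z.+2 & C w z.+3].
  case: (vacant_blocks hC hu' hz2 a2) => [[_ _ h] | [_ _ h] | [u1 h1 h2' h3]].
  - by rewrite h in v1.
  - by rewrite h in v3.
  - by exists u.-1; split => //; lia.
subst u.
have bound x a : x < z.+3 -> 1 <= a <= m -> 3 * vacancies C a x <= x.+1.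
  by move=> xz ha; apply: sparse => //; lia.
have vw : vacancies C w z.+3 = vacancies C w z by rewrite !vacancies_house.
have vw1 : vacancies C w.+1 z.+3 = vacancies C w.+1 z.+2 by rewrite vacancies_house.
have hw : 1 <= w <= m by lia.
have c2 : ~~ C w.+2 2.
  apply/negP => c2; have := vacancies_le_above_house2 hu c2 zn.
  by have := bound z.+2 w.+1 (ltnSn _) hu'; lia.
have c2' : ~~ C w.+1 2.
  apply/negP => c2'; have hw' : 1 <= w < m by lia.
  have := vacancies_le_above hu zn; have := vacancies_le_above_house2 hw' c2' zn.
  by have := bound z w (leqW (leqnSn _)) hw; lia.
have h22 : 1 <= 2 <= n by have := es_cols hC; lia.
by have [_ _ _ _ h] := vacant_enclosed hC hu' h22 c2'; rewrite h in c2.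
Qed.

Lemma vacancies_sparse x a : x <= n -> 1 <= a <= m -> 3 * vacancies C a x <= x.+1.
Proof.
elim/ltn_ind: x a => x IH a xn ha.
have sparse : sparse_below x by move=> y b yx yn hb; exact: IH.
rewrite leqNgt; apply/negP => viol.
have [z [ex v1 v3 tight]] := sparse_violation_shape ha xn sparse viol.
subst x.
case: a ha v1 v3 tight viol => [|[|u]] ha v1 v3 tight viol //.
  by have := top_row_gap_not_tight xn sparse v1 v3; rewrite tight eqxx.
have hu : 1 <= u.+1 < m by lia.
by have := lower_row_gap_sparse hu xn sparse v1 v3; lia.
Qed.

Lemma house_of_nonfull a T : 1 <= a <= m -> (3 * T).+1 <= n ->
  nonfull_on n C a (fun c => c %% 3 == 2) -> C a (3 * T).+1.
Proof.
move=> ha hT nonfull.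
have : forall t, t < T -> ~~ full3 C a (3 * t).+2.
  by move=> t tT; apply: nonfull; [lia | apply/eqP; lia].
move/vacancies_nonfull; apply: contraTT => hv.
by have := vacancies_sparse hT ha; rewrite vacancies_vacant //; lia.
Qed.
End Rules.

Definition mirror n (C : config) : config := fun i j => C i (n.+1 - j).

Lemma es_rules_mirror m n C : es_rules m n C -> es_rules m n (mirror n C).
Proof.
case=> hm hn enclosed unblocked blocks; split => //; rewrite /mirror.
- move=> a b ha hb hv; have hb' : 1 <= n.+1 - b <= n by lia.
  have [hb2 am l r d] := enclosed a _ ha hb' hv.
  have -> : n.+1 - b.-1 = (n.+1 - b).+1 by lia.
  have -> : n.+1 - b.+1 = (n.+1 - b).-1 by lia.
  by split => //; lia.
- move=> i j hi hj l x r.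
  have hj' : 1 < n.+1 - j < n by lia.
  move: l r; have -> : n.+1 - j.-1 = (n.+1 - j).+1 by lia.
  have -> : n.+1 - j.+1 = (n.+1 - j).-1 by lia.
  by move=> l r; apply: unblocked.
- move=> a b ha hb hv; have hb' : 1 <= n.+1 - b <= n by lia.
  case: (blocks a _ ha hb' hv) => [[b2 l d] | [b2 r d] | [a1 l x r]].
  + apply: Or32; have -> : n.+1 - b.+2 = n.+1 - b - 2 by lia.
    have -> : n.+1 - b.+1 = (n.+1 - b).-1 by lia.
    by split => //; lia.
  + apply: Or31; have -> : n.+1 - (b - 2) = (n.+1 - b).+2 by lia.
    have -> : n.+1 - b.-1 = (n.+1 - b).+1 by lia.
    by split => //; lia.
  + apply: Or33; have -> : n.+1 - b.-1 = (n.+1 - b).+1 by lia.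
    by have -> : n.+1 - b.+1 = (n.+1 - b).-1 by lia.
Qed.

Lemma full3_mirror n C a c : 0 < c <= n ->
  full3 (mirror n C) a c = full3 C a (n.+1 - c).
Proof.
move=> hc; rewrite /full3 /mirror.
have -> : n.+1 - c.-1 = (n.+1 - c).+1 by lia.
have -> : n.+1 - c.+1 = (n.+1 - c).-1 by lia.
by case: (C a (n.+1 - c).-1); case: (C a (n.+1 - c)); rewrite ?andbT ?andbF.
Qed.

Lemma nonfull_on_mirror n C a (P : pred nat) : nonfull_on n C a P ->
  nonfull_on n (mirror n C) a (fun c => P (n.+1 - c)).
Proof. by move=> h c hc Pc; rewrite full3_mirror ?h //; lia. Qed.

Definition pattern101 n (C : config) a :=
  forall j, 1 <= j <= n -> C a j = ~~ (j %% 3 == 2).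

Section Patterns.
Variables (m n : nat) (C : config).
Hypothesis hC : es_rules m n C.

Lemma house_of_nonfull_mirror a T : 1 <= a <= m -> (3 * T).+1 <= n ->
  nonfull_on n C a (fun c => (n.+1 - c) %% 3 == 2) -> C a (n - 3 * T).
Proof.
move=> ha hT h.
have h' : nonfull_on n (mirror n C) a (fun c => c %% 3 == 2).
  move=> c hc c2; have e : n.+1 - (n.+1 - c) = c by lia.
  by apply: (nonfull_on_mirror h) => //=; rewrite e.
by have := house_of_nonfull (es_rules_mirror hC) ha hT h'.
Qed.

Lemma house_of_nonfull_ends a j : 1 <= a <= m -> 1 <= j <= n ->
  nonfull_on n C a (fun c => (c %% 3 == 2) || ((n.+1 - c) %% 3 == 2)) ->
  (j %% 3 == 1) || ((n - j) %% 3 == 0) -> C a j.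
Proof.
move=> ha hj h /orP[j1 | j0].
  have [t ej] : exists t, j = (3 * t).+1 by exists (j %/ 3); lia.
  subst j; apply: (house_of_nonfull hC) => // c hc c2.
  by apply: h; rewrite ?c2.
have [t ej] : exists t, j = n - 3 * t by exists ((n - j) %/ 3); lia.
subst j; apply: house_of_nonfull_mirror => //; first lia.
by move=> c hc c2; apply: h; rewrite ?c2 ?orbT.
Qed.

Lemma pattern101_of_nonfull a : 1 <= a <= m -> n %% 3 = 0 ->
  nonfull_on n C a (fun c => c %% 3 == 2) -> pattern101 n C a.
Proof.
move=> ha n0 h.
have houses j : 1 <= j <= n -> j %% 3 != 2 -> C a j.
  move=> hj j2; apply: house_of_nonfull_ends => //; last lia.
  by move=> c hc c2; apply: h => //; lia.
move=> j hj; have [j2 | j2] := eqVneq (j %% 3) 2; last by rewrite houses.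
apply/negbTE/negP => hx.
have hj' : 1 < j < n by lia.
have := h j hj' (introT eqP j2); rewrite /full3 hx !houses //; lia.
Qed.

Lemma penultimate_row_nonfull : nonfull_on n C m.-1 predT.
Proof.
have hm := es_rows hC; apply: (nonfull_on_above hC); first lia.
by move=> c hc _; rewrite prednK; [apply: (bottom_row_house hC) | ]; lia.
Qed.

Lemma pattern101_rows k : n %% 3 = 0 -> 1 <= m - 1 - 2 * k ->
  pattern101 n C (m - 1 - 2 * k).
Proof.
move=> n0; have hm := es_rows hC.
elim: k => [|k IH] hk.
  rewrite muln0 subn0 subn1; apply: pattern101_of_nonfull => //; first lia.
  by move=> c hc _; apply: penultimate_row_nonfull.
have row : pattern101 n C (m - 1 - 2 * k) by apply: IH; lia.
have [r er] : exists r, m - 1 - 2 * k = r.+2 by exists (m - 3 - 2 * k); lia.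
rewrite er in row; have -> : m - 1 - 2 * k.+1 = r by lia.
apply: pattern101_of_nonfull => //; first lia.
apply: (nonfull_on_above hC); first lia.
move=> c hc c2; apply: (house_above_vacant hC); [lia | lia |].
by rewrite row ?c2 //; lia.
Qed.

(* For n = 3N + 2 both rows m-1 and m-2 would be vacant at column 3. *)
Lemma cols_mod3_neq2 : n %% 3 != 2.
Proof.
apply/eqP => n2; have hm := es_rows hC; have hn := es_cols hC.
have row_shape a : 1 <= a <= m -> nonfull_on n C a (fun c => c %% 3 != 0) ->
    (forall c, 1 <= c <= n -> c %% 3 != 0 -> C a c) /\ ~~ C a 3.
  move=> ha h.
  have houses c : 1 <= c <= n -> c %% 3 != 0 -> C a c.
    move=> hc c0; apply: house_of_nonfull_ends => //; last lia.
    by move=> d hd d2; apply: h => //; lia.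
  split => //; apply/negP => c3.
  have h2 : 1 < 2 < n by lia.
  by have := h 2 h2 isT; rewrite /full3 /= c3 !houses //; lia.
have [p ep] : exists p, m = p.+3 by exists (m - 3); lia.
have hp2 : 1 <= m.-1 <= m by lia.
have [below v2] := row_shape m.-1 hp2 (fun c hc _ => penultimate_row_nonfull hc isT).
have hp1 : 1 <= p.+1 < m by lia.
have ha : nonfull_on n C p.+1 (fun c => c %% 3 != 0).
  apply: (nonfull_on_above hC hp1) => c hc c0.
  by rewrite ep in below; apply: below => //; lia.
have hp1' : 1 <= p.+1 <= m by lia.
have [_ v1] := row_shape p.+1 hp1' ha.
have h3 : 1 <= 3 <= n by lia.
rewrite ep /= in v2.
by rewrite (house_above_vacant hC hp1 h3 v2) in v1.
Qed.

Lemma penultimate_row_houses t : (3 * t).+1 <= n -> C m.-1 (3 * t).+1.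
Proof.
have hm := es_rows hC; move=> tn; apply: (house_of_nonfull hC) => //; first lia.
by move=> c hc _; apply: penultimate_row_nonfull.
Qed.

(* Otherwise row m-1 reads 101 101 ... 101 1; then (m-2, n-1) is vacant and can only
   block upwards, which completes a triple of row m-3 lying above a house. *)
Lemma penultimate_row_second_house : n %% 3 = 1 -> C m.-1 2.
Proof.
move=> n1; apply/idPn; have hm := es_rows hC.
have [p ep] : exists p, m = p.+3 by exists (m - 3); lia.
have [M eM] : exists M, n = (3 * M).+4 by have := es_cols hC; exists (n %/ 3).-1; lia.
have nb := penultimate_row_nonfull; have ones := penultimate_row_houses.
rewrite ep /= in nb ones * => v2.
have hp2 : 1 <= p.+2 <= m by lia.
have vac2 t : t <= M -> ~~ C p.+2 (3 * t).+2.
  elim: t => [//|t IH] tM.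
  have ht : 1 <= (3 * t).+2 <= n by lia.
  have [_ _ _ h3 _] := vacant_enclosed hC hp2 ht (IH (ltnW tM)).
  have tn : (3 * t.+1).+1 <= n by lia.
  have := ones _ tn; have -> : 3 * t.+1 = (3 * t).+3 by lia.
  move=> h4; apply/negP => h5; have hc : 1 < (3 * t).+4 < n by lia.
  by have := nb _ hc isT; rewrite /full3 /= h3 h4 h5.
have hp1 : 1 <= p.+1 < m by lia.
have up2 t : t <= M -> C p.+1 (3 * t).+2.
  by move=> tM; apply: (house_above_vacant hC hp1) (vac2 t tM); lia.
have hM : 1 <= (3 * M).+2 <= n by lia.
have [_ _ _ h3 _] := vacant_enclosed hC hp2 hM (vac2 M (leqnn M)).
have hp1' : 1 <= p.+1 <= m by lia.
have v3 : ~~ C p.+1 (3 * M).+3.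
  apply/negP => x; have hc : 1 < (3 * M).+3 < n by lia.
  have := last_col_house hC hp1'; rewrite eM => r.
  by have := house_unblocked hC hp1 hc (up2 M (leqnn M)) x r; rewrite h3.
have hM3 : 1 <= (3 * M).+3 <= n by lia.
have [p0 w1 w2 w3] : [/\ 0 < p, C p (3 * M).+2, C p (3 * M).+3 & C p (3 * M).+4].
  case: (vacant_blocks hC hp1' hM3 v3) => [[_ _ l] | [r _ _] | [p1 l x r]].
  - by rewrite (negbTE (vac2 M (leqnn M))) in l.
  - lia.
  - by split.
have np : nonfull_on n C p (fun c => c %% 3 == 2).
  apply: (nonfull_on_above hC); first lia.
  move=> c hc c2; have [t ec] : exists t, c = (3 * t).+2 by exists (c %/ 3); lia.
  by subst c; apply: up2; lia.
have hp : 1 <= p <= m by lia.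
have hTM : (3 * M).+1 <= n by lia.
have w0 := house_of_nonfull hC hp hTM np.
have hc : 1 < (3 * M).+2 < n by lia.
have c2 : (3 * M).+2 %% 3 == 2 by apply/eqP; lia.
by have := np _ hc c2; rewrite /full3 /= w0 w1 w2.
Qed.

(* Otherwise row m-1 has (n-1)/3 vacancies up to column n-2; interlacing passes
   them to row m-2, which then breaks the density bound at column n-1. *)
Lemma penultimate_row_corner_vacant : n %% 3 = 1 -> C m.-1 2 -> ~~ C m.-1 n.-1.
Proof.
move=> n1; have hm := es_rows hC.
have [p ep] : exists p, m = p.+3 by exists (m - 3); lia.
have [M eM] : exists M, n = (3 * M).+4 by have := es_cols hC; exists (n %/ 3).-1; lia.
have nb := penultimate_row_nonfull; have ones := penultimate_row_houses.
rewrite ep /= in nb ones *; rewrite eM /= => c2; apply/negP => cn.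
have nonfull t : t < M.+1 -> ~~ full3 C p.+2 (3 * t).+2.
  by move=> tM; apply: nb => //; lia.
have := vacancies_nonfull nonfull; have -> : 3 * M.+1 = (3 * M).+3 by lia.
rewrite vacancies_house // => count.
have hp1 : 1 <= p.+1 < m by lia.
have hy : (3 * M).+2 <= n by lia.
have le := vacancies_le_above_house2 hC hp1 c2 hy.
have hM : (3 * M).+1 <= n by lia.
have hc : 1 < (3 * M).+2 < n by lia.
have v2 : ~~ C p.+2 (3 * M).+2.
  by apply/negP => x; have := nb _ hc isT; rewrite /full3 /= (ones M hM) x cn.
have hM2 : 1 <= (3 * M).+2 <= n by lia.
have h2 := house_above_vacant hC hp1 hM2 v2.
have hp1' : 1 <= p.+1 <= m by lia.
have v3 : ~~ C p.+1 (3 * M).+3.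
  apply/negP => x; have hc3 : 1 < (3 * M).+3 < n by lia.
  have := last_col_house hC hp1'; rewrite eM => r.
  by have := house_unblocked hC hp1 hc3 h2 x r; rewrite cn.
have hx : (3 * M).+3 <= n by lia.
by have := vacancies_sparse hC hx hp1'; rewrite vacancies_vacant //; lia.
Qed.
End Patterns.

Lemma es_rules_cols_mod3 m n C : es_rules m n C -> n %% 3 = 0.
Proof.
move=> hC; have n2 := cols_mod3_neq2 hC.
have n1 : n %% 3 != 1.
  apply/eqP => n1.
  have := penultimate_row_corner_vacant hC n1 (penultimate_row_second_house hC n1).
  have := penultimate_row_second_house (es_rules_mirror hC) n1.
  by rewrite /mirror subSS subn1 => ->.
by have := ltn_pmod n (isT : 0 < 3); lia.
Qed.

Theorem mainTheorem15 (m n : nat) (C : config) :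
  2 < m -> 2 < n -> ES m n C ->
  forall k j : nat, 1 <= m - 1 - 2 * k -> 1 <= j <= n ->
    C (m - 1 - 2 * k) j = ~~ (j %% 3 == 2).
Proof.
move=> hm hn hES k j hk.
have hC := es_rules_of_ES hm hn hES.
have rows := pattern101_rows hC (es_rules_cols_mod3 hC) hk.
exact: rows.
Qed.
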